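(* Let $m\ge3$ and let $c_j(a)$, $0\le j\le m+1$, be as defined in the context. Then: (i) each $c_j(a)$ is a polynomial in $a_1,\dots,a_m$; (ii) $c_0(a)$ is independent of $a$; (iii) for $1\le j\le m$, $c_j(a)$ depends only on $a_1,\dots,a_j$ and is a non-constant affine-linear function of $a_j$ (for fixed $a_1,\dots,a_{j-1}$).
   Context: $a=(a_1,\dots,a_m)\in\mathbb C^m$, $P(z)=a_1z^{m-1}+\dots+a_m$, $\binom{1/2}{k}=\frac{\frac12(\frac12-1)\cdots(\frac12-k+1)}{k!}$. For $j\ge1$, $1\le k\le j$, $b_{j,k}(a)$ is the coefficient of $z^{mk-j}$ in $\binom{1/2}{k}P(z)^k$ ($0$ if $mk-j<0$), $b_j(a)=\sum_{k=1}^jb_{j,k}(a)$, $\nu(a)=0$ for $m$ odd and $\nu(a)=b_{\frac m2+1}(a)$ for $m$ even. $g_j(\tau)=\sum_{k=1}^{j}b_{j,k}(a)\tau^{mk-j}(\tau^m+1)^{-(k-\frac12)}$. $K_{m,0}=\int_0^\infty(\sqrt{1+t^m}-t^{m/2})dt$; $K_{m,j}(a)=\int_0^\infty(g_j(t)-b_j(a)t^{\frac m2-j})dt$ for $1\le j\le\frac{m+1}2$; $K_{m,\frac m2+1}(a)=\int_0^\infty(g_{\frac m2+1}(t)-\frac{b_{\frac m2+1}(a)}{t+1})dt$ for $m$ even; $K_{m,j}(a)=\int_0^\infty g_j(t)dt$ for $j\ge\frac{m+3}2$. Then $c_j(a)=\frac1\pi\cos(\frac{(j-1)\pi}m)K_{m,j}(a)$,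 except $c_{\frac m2+1}(a)=-\frac{\nu(a)}m$ when $m$ is even. *)

From Stdlib Require Import Reals Arith List Lia ClassicalEpsilon Factorial.
Open Scope R_scope.

Definition Cplx := (R * R)%type.
Definition C0 : Cplx := (0, 0).
Definition C1 : Cplx := (1, 0).
Definition RtoC (r : R) : Cplx := (r, 0).
Definition Cadd (x y : Cplx) : Cplx := (fst x + fst y, snd x + snd y).
Definition Cmul (x y : Cplx) : Cplx :=
  (fst x * fst y - snd x * snd y, fst x * snd y + snd x * fst y).
Definition Cscale (r : R) (x : Cplx) : Cplx := (r * fst x, r * snd x).
Definition Csub (x y : Cplx) : Cplx := Cadd x (Cscale (-1) y).
Fixpoint Cpow (x : Cplx) (n : nat) : Cplx :=
  match n with O => C1 | S n => Cmul x (Cpow x n) end.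
Definition Csum {A : Type} (f : A -> Cplx) (l : list A) : Cplx :=
  fold_right (fun x acc => Cadd (f x) acc) C0 l.
Definition Cprod {A : Type} (f : A -> Cplx) (l : list A) : Cplx :=
  fold_right (fun x acc => Cmul (f x) acc) C1 l.

(* ---------- univariate polynomials over Cplx: coefficient lists, z^0 first ---------- *)
Fixpoint padd (p q : list Cplx) : list Cplx :=
  match p, q with
  | nil, _ => q
  | _, nil => p
  | x :: p', y :: q' => Cadd x y :: padd p' q'
  end.
Fixpoint pmul (p q : list Cplx) : list Cplx :=
  match p with
  | nil => nil
  | c :: p' => padd (map (Cmul c) q) (C0 :: pmul p' q)
  end.
Fixpoint ppow (p : list Cplx) (k : nat) : list Cplx :=
  match k with O => C1 :: nil | S k => pmul p (ppow p k) end.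
Definition pcoef (p : list Cplx) (n : nat) : Cplx := nth n p C0.

(* a = (a_1,...,a_m) is modelled as a function nat -> Cplx; only a 1..a m are used. *)
(* P(z) = a_1 z^(m-1) + ... + a_m : coefficient of z^i is a_(m-i), 0 <= i <= m-1 *)
Definition Ppoly (m : nat) (a : nat -> Cplx) : list Cplx :=
  map (fun i => a (m - i)%nat) (seq 0 m).

Fixpoint falling (x : R) (k : nat) : R :=
  match k with O => 1 | S k => falling x k * (x - INR k) end.
Definition binom_half (k : nat) : R := falling (1/2) k / INR (fact k).

Definition bjk (m : nat) (a : nat -> Cplx) (j k : nat) : Cplx :=
  if Nat.ltb (m * k) j then C0
  else Cscale (binom_half k) (pcoef (ppow (Ppoly m a) k) (m * k - j)).

Definition bj (m : nat) (a : nat -> Cplx) (j : nat) : Cplx :=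
  Csum (fun k => bjk m a j k) (seq 1 j).

Definition nu (m : nat) (a : nat -> Cplx) : Cplx :=
  if Nat.even m then bj m a (m / 2 + 1) else C0.

(* g_j(tau) = sum_k b_{j,k} tau^(mk-j) (tau^m+1)^(-(k-1/2)) ;
   when mk-j<0 the coefficient b_{j,k} is 0, so the term vanishes *)
Definition gj (m : nat) (a : nat -> Cplx) (j : nat) (tau : R) : Cplx :=
  Csum (fun k => Cscale (tau ^ (m * k - j) * Rpower (tau ^ m + 1) (- (INR k - 1/2)))
                        (bjk m a j k))
       (seq 1 j).

Definition is_int_0_inf (f : R -> R) (l : R) : Prop :=
  (forall x y, 0 < x -> x <= y -> inhabited (Riemann_integrable f x y)) /\
  (forall eps, 0 < eps -> exists d, 0 < d /\ exists M, 0 < M /\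
     forall x y (pr : Riemann_integrable f x y),
       0 < x -> x < d -> M < y -> Rabs (RiemannInt pr - l) < eps).

Definition Int0inf (f : R -> R) : R :=
  epsilon (inhabits 0) (is_int_0_inf f).

Definition CInt0inf (f : R -> Cplx) : Cplx :=
  (Int0inf (fun t => fst (f t)), Int0inf (fun t => snd (f t))).

Definition Kmj (m : nat) (a : nat -> Cplx) (j : nat) : Cplx :=
  if Nat.eqb j 0 then
    RtoC (Int0inf (fun t => sqrt (1 + t ^ m) - Rpower t (INR m / 2)))
  else if Nat.leb (2 * j) (m + 1) then
    CInt0inf (fun t => Csub (gj m a j t)
                            (Cscale (Rpower t (INR m / 2 - INR j)) (bj m a j)))
  else if andb (Nat.even m) (Nat.eqb (2 * j) (m + 2)) then
    CInt0inf (fun t => Csub (gj m a j t) (Cscale (/ (t + 1)) (bj m a j)))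
  else
    CInt0inf (gj m a j).

Definition cj (m : nat) (j : nat) (a : nat -> Cplx) : Cplx :=
  if andb (Nat.even m) (Nat.eqb (2 * j) (m + 2)) then
    Cscale (- / INR m) (nu m a)
  else
    Cscale (/ PI * cos ((INR j - 1) * PI / INR m)) (Kmj m a j).

Definition is_poly_fun (m : nat) (f : (nat -> Cplx) -> Cplx) : Prop :=
  exists l : list (Cplx * (nat -> nat)),
    forall a : nat -> Cplx,
      f a = Csum (fun ce => Cmul (fst ce) (Cprod (fun i => Cpow (a i) (snd ce i)) (seq 1 m))) l.

Definition upd (a : nat -> Cplx) (j : nat) (x : Cplx) : nat -> Cplx :=
  fun i => if Nat.eqb i j then x else a i.

From Pilot Require Import Defs.
From Stdlib Require Import Reals Lra Lia Psatz List Ring ClassicalEpsilon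
  FunctionalExtensionality.
Open Scope R_scope.

(* For j >= 1 the integrand of K_{m,j}(a) is a finite combination sum_k b_{j,k}(a) w_{j,k}(t)
   of functions w_{j,k} that do not depend on a (the subtracted term b_j(a) t^(m/2-j)
   distributes over the same sum, since b_j = sum_k b_{j,k}), and each w_{j,k} is integrable
   on (0, +oo): it is O(t^(-1/2)) at 0 and O(t^(-3/2)) at +oo.  Hence
   c_j(a) = s_j sum_k I_{j,k} b_{j,k}(a) with constants s_j and I_{j,k}; in the exceptional case
   j = m/2 + 1 this holds with s_j = -1/m and I_{j,k} = 1.  Each b_{j,k}(a) is a coefficient of
   P^k, so it is a polynomial in a, and since P has degree m - 1 it only involves
   a_1, ..., a_(j-k+1).  Thus a_j enters c_j only through b_{j,1}(a) = a_j / 2, with coefficient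
   s_j I_{j,1} / 2.  This is nonzero: cos((j-1) pi / m) <> 0 because 2(j-1) <> m, and
   w_{j,1} has a constant sign on (0, +oo). *)

Definition Copp (x : Cplx) : Cplx := Cscale (-1) x.

(* [Defs.C1] is qualified because [C1] also names a constant of [Reals]. *)
Lemma Cring : ring_theory C0 Defs.C1 Cadd Cmul Csub Copp (@eq Cplx).
Proof.
  constructor; intros;
  repeat match goal with x : Cplx |- _ => destruct x end;
  unfold Csub, Copp, C0, Defs.C1, Cadd, Cmul, Cscale; simpl; f_equal; ring.
Qed.
Add Ring Cring : Cring.

Lemma Cscale_Cmul r x : Cscale r x = Cmul (RtoC r) x.
Proof. destruct x; unfold Cscale, Cmul, RtoC; simpl; f_equal; ring. Qed.

Lemma RtoC_mult a b : RtoC (a * b) = Cmul (RtoC a) (RtoC b).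
Proof. unfold RtoC, Cmul; simpl; f_equal; ring. Qed.

Lemma RtoC_minus a b : RtoC (a - b) = Csub (RtoC a) (RtoC b).
Proof. unfold RtoC, Csub, Cadd, Cscale; simpl; f_equal; ring. Qed.

Lemma RtoC_neq0 r : r <> 0 -> RtoC r <> C0.
Proof. intros Hr E; apply Hr; injection E; auto. Qed.

Section Csum.
Context {A : Type}.

Lemma Csum_cons (f : A -> Cplx) x l : Csum f (x :: l) = Cadd (f x) (Csum f l).
Proof. reflexivity. Qed.

Lemma Csum_app (f : A -> Cplx) l1 l2 :
  Csum f (l1 ++ l2) = Cadd (Csum f l1) (Csum f l2).
Proof. induction l1; simpl; [ring | rewrite IHl1; ring]. Qed.

Lemma Csum_ext (f g : A -> Cplx) l :
  (forall x, In x l -> f x = g x) -> Csum f l = Csum g l.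
Proof. induction l; simpl; intros H; auto. rewrite H, IHl; auto. Qed.

Lemma Csum_zero (f : A -> Cplx) l : (forall x, In x l -> f x = C0) -> Csum f l = C0.
Proof. induction l; simpl; intros H; auto. rewrite H, IHl; auto. ring. Qed.

Lemma Csum_mull c (f : A -> Cplx) l :
  Csum (fun x => Cmul c (f x)) l = Cmul c (Csum f l).
Proof. induction l; simpl; [ring | rewrite IHl; ring]. Qed.

Lemma Csum_map {B} (f : B -> Cplx) (g : A -> B) l :
  Csum f (map g l) = Csum (fun x => f (g x)) l.
Proof. induction l; simpl; congruence. Qed.

Lemma Csum_scale_sub (w : A -> R) r (c : A -> Cplx) l :
  Csum (fun k => Cscale (w k - r) (c k)) l
  = Csub (Csum (fun k => Cscale (w k) (c k)) l) (Cscale r (Csum c l)).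
Proof.
  induction l; simpl.
  - unfold Csub, Cscale, Cadd, C0; simpl; f_equal; ring.
  - rewrite IHl, !Cscale_Cmul, RtoC_minus; ring.
Qed.

End Csum.

Lemma Csum_seq_shift (f : nat -> Cplx) s n :
  Csum f (seq (S s) n) = Csum (fun i => f (S i)) (seq s n).
Proof. rewrite <- seq_shift, Csum_map; reflexivity. Qed.

(** * Coefficients of powers of P *)

Lemma pcoef_nil n : pcoef nil n = C0.
Proof. destruct n; reflexivity. Qed.

Lemma pcoef_padd p q n : pcoef (padd p q) n = Cadd (pcoef p n) (pcoef q n).
Proof.
  revert q n; induction p as [|x p IH]; intros [|y q] n; simpl;
    rewrite ?pcoef_nil; try ring.
  destruct n; [reflexivity | apply (IH q n)].
Qed.

Lemma pcoef_map_Cmul c q n : pcoef (map (Cmul c) q) n = Cmul c (pcoef q n).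
Proof.
  revert n; induction q; intros [|n]; simpl; rewrite ?pcoef_nil; try ring.
  - reflexivity.
  - apply IHq.
Qed.

Lemma pcoef_pmul p q n :
  pcoef (pmul p q) n = Csum (fun i => Cmul (pcoef p i) (pcoef q (n - i))) (seq 0 (S n)).
Proof.
  revert n; induction p as [|c p IH]; intros n; simpl pmul.
  - rewrite pcoef_nil, Csum_zero; auto. intros; rewrite pcoef_nil; ring.
  - rewrite pcoef_padd, pcoef_map_Cmul; cbn [seq]; rewrite Csum_cons, Nat.sub_0_r.
    f_equal; destruct n as [|n].
    + unfold pcoef; simpl; ring.
    + rewrite Csum_seq_shift; exact (IH n).
Qed.

Lemma pcoef_pmul_C1 p n : pcoef (pmul p (Defs.C1 :: nil)) n = pcoef p n.
Proof.
  revert n; induction p; intros [|n]; unfold pcoef in *; simpl; try ring; auto.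
Qed.

Lemma pcoef_Ppoly_lt m a n : (n < m)%nat -> pcoef (Ppoly m a) n = a (m - n)%nat.
Proof.
  intros H; unfold pcoef, Ppoly.
  rewrite nth_indep with (d' := a (m - 0)%nat) by (rewrite length_map, length_seq; auto).
  rewrite (map_nth (fun i => a (m - i)%nat)), seq_nth; auto.
Qed.

Lemma pcoef_Ppoly_ge m a n : (m <= n)%nat -> pcoef (Ppoly m a) n = C0.
Proof. intros H; unfold pcoef, Ppoly; apply nth_overflow; rewrite length_map, length_seq; auto. Qed.

Lemma pcoef_ppow_Ppoly_gt m a k n :
  ((m - 1) * k < n)%nat -> pcoef (ppow (Ppoly m a) k) n = C0.
Proof.
  revert n; induction k; intros n Hn.
  - destruct n as [|[|n]]; [lia | reflexivity | reflexivity].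
  - simpl ppow; rewrite pcoef_pmul; apply Csum_zero; intros i Hi; apply in_seq in Hi.
    destruct (Nat.lt_ge_cases i m).
    + rewrite IHk; [ring | nia].
    + rewrite pcoef_Ppoly_ge; auto; ring.
Qed.

(* Only a_(m-i) with i <= n enter the coefficient of z^n, and the degree bound kills
   every product that would need some a_i with i > J. *)
Lemma pcoef_ppow_Ppoly_local m a a' J k n :
  (forall i, (1 <= i <= J)%nat -> a i = a' i) ->
  ((m - 1) * k + 1 <= n + J)%nat ->
  pcoef (ppow (Ppoly m a) k) n = pcoef (ppow (Ppoly m a') k) n.
Proof.
  intros Ha; revert n; induction k; intros n Hn; [reflexivity|].
  simpl ppow; rewrite !pcoef_pmul; apply Csum_ext; intros i Hi; apply in_seq in Hi.
  destruct (Nat.lt_ge_cases i m).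
  - destruct (Nat.le_gt_cases (m - i) J).
    + rewrite !pcoef_Ppoly_lt, Ha, IHk by nia; reflexivity.
    + rewrite !pcoef_ppow_Ppoly_gt by nia; ring.
  - rewrite !pcoef_Ppoly_ge by auto; ring.
Qed.

(** * Polynomial functions of a *)

Definition monomial m (e : nat -> nat) (a : nat -> Cplx) : Cplx :=
  Cprod (fun i => Cpow (a i) (e i)) (seq 1 m).

Definition poly_eval m (l : list (Cplx * (nat -> nat))) (a : nat -> Cplx) : Cplx :=
  Csum (fun ce => Cmul (fst ce) (monomial m (snd ce) a)) l.

Definition poly_mul (l1 l2 : list (Cplx * (nat -> nat))) : list (Cplx * (nat -> nat)) :=
  flat_map (fun x => map (fun y => (Cmul (fst x) (fst y), fun i => (snd x i + snd y i)%nat)) l2) l1.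

Lemma Cpow_add x n k : Cpow x (n + k) = Cmul (Cpow x n) (Cpow x k).
Proof. induction n; simpl; [ring | rewrite IHn; ring]. Qed.

Lemma Cprod_cons {A} (f : A -> Cplx) x l : Cprod f (x :: l) = Cmul (f x) (Cprod f l).
Proof. reflexivity. Qed.

Lemma Cprod_mul {A} (f g : A -> Cplx) l :
  Cprod (fun x => Cmul (f x) (g x)) l = Cmul (Cprod f l) (Cprod g l).
Proof. induction l; simpl; [ring | rewrite IHl; ring]. Qed.

Lemma Cprod_ext {A} (f g : A -> Cplx) l :
  (forall x, In x l -> f x = g x) -> Cprod f l = Cprod g l.
Proof. induction l; simpl; intros H; auto. rewrite H, IHl; auto. Qed.

Lemma monomial_add m e1 e2 a :
  monomial m (fun i => (e1 i + e2 i)%nat) a = Cmul (monomial m e1 a) (monomial m e2 a).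
Proof. unfold monomial; rewrite <- Cprod_mul; apply Cprod_ext; intros; apply Cpow_add. Qed.

Lemma monomial_0 m a : monomial m (fun _ => 0%nat) a = Defs.C1.
Proof.
  unfold monomial; induction (seq 1 m) as [|x l IH]; [reflexivity|].
  rewrite Cprod_cons, IH; simpl; ring.
Qed.

Lemma Cprod_indicator_pow_out (a : nat -> Cplx) i s n : (i < s \/ s + n <= i)%nat ->
  Cprod (fun l => Cpow (a l) (if Nat.eqb l i then 1%nat else 0%nat)) (seq s n) = Defs.C1.
Proof.
  revert s; induction n; intros s H; [reflexivity|].
  simpl seq; rewrite Cprod_cons, IHn by lia.
  destruct (Nat.eqb_spec s i); [lia | simpl; ring].
Qed.

Lemma Cprod_indicator_pow_in (a : nat -> Cplx) i s n : (s <= i < s + n)%nat ->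
  Cprod (fun l => Cpow (a l) (if Nat.eqb l i then 1%nat else 0%nat)) (seq s n) = a i.
Proof.
  revert s; induction n; intros s H; [lia|].
  simpl seq; rewrite Cprod_cons.
  destruct (Nat.eqb_spec s i) as [<-|Hne].
  - rewrite Cprod_indicator_pow_out by lia; simpl; ring.
  - rewrite IHn by lia; simpl; ring.
Qed.

Lemma is_poly_fun_ext m f g : (forall a, f a = g a) -> is_poly_fun m f -> is_poly_fun m g.
Proof. intros E [l H]; exists l; intros a; rewrite <- E; apply H. Qed.

Lemma is_poly_fun_const m c : is_poly_fun m (fun _ => c).
Proof.
  exists ((c, fun _ => 0%nat) :: nil); intros a.
  pose proof (monomial_0 m a) as E; unfold monomial in E.
  cbn [Csum fold_right fst snd]; rewrite E; ring.
Qed.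

Lemma is_poly_fun_var m i : (1 <= i <= m)%nat -> is_poly_fun m (fun a => a i).
Proof.
  intros Hi; exists ((Defs.C1, fun l => if Nat.eqb l i then 1%nat else 0%nat) :: nil); intros a.
  cbn [Csum fold_right fst snd]; rewrite Cprod_indicator_pow_in by lia; ring.
Qed.

Lemma is_poly_fun_add m f g : is_poly_fun m f -> is_poly_fun m g ->
  is_poly_fun m (fun a => Cadd (f a) (g a)).
Proof. intros [l1 H1] [l2 H2]; exists (l1 ++ l2); intros a; rewrite Csum_app, H1, H2; reflexivity. Qed.

Lemma poly_eval_mul m l1 l2 a :
  poly_eval m (poly_mul l1 l2) a = Cmul (poly_eval m l1 a) (poly_eval m l2 a).
Proof.
  unfold poly_eval; induction l1 as [|x l1 IH]; simpl; [ring|].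
  rewrite Csum_app, IH, Csum_map; simpl.
  rewrite (Csum_ext _ (fun y => Cmul (Cmul (fst x) (monomial m (snd x) a))
                                     (Cmul (fst y) (monomial m (snd y) a))))
    by (intros; rewrite monomial_add; ring).
  rewrite Csum_mull; ring.
Qed.

Lemma is_poly_fun_mul m f g : is_poly_fun m f -> is_poly_fun m g ->
  is_poly_fun m (fun a => Cmul (f a) (g a)).
Proof.
  intros [l1 H1] [l2 H2]; exists (poly_mul l1 l2); intros a.
  exact (eq_trans (f_equal2 Cmul (H1 a) (H2 a)) (eq_sym (poly_eval_mul m l1 l2 a))).
Qed.

Lemma is_poly_fun_scale m r f : is_poly_fun m f -> is_poly_fun m (fun a => Cscale r (f a)).
Proof.
  intros H; apply (is_poly_fun_ext m (fun a => Cmul (RtoC r) (f a))).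
  - intros; rewrite Cscale_Cmul; auto.
  - apply is_poly_fun_mul; auto; apply is_poly_fun_const.
Qed.

Lemma is_poly_fun_Csum {A} m (F : A -> (nat -> Cplx) -> Cplx) l :
  (forall x, In x l -> is_poly_fun m (F x)) -> is_poly_fun m (fun a => Csum (fun x => F x a) l).
Proof.
  induction l; intros H; simpl.
  - apply is_poly_fun_const.
  - apply is_poly_fun_add; [apply H; simpl; auto | apply IHl; intros; apply H; simpl; auto].
Qed.

Lemma is_poly_fun_pcoef_Ppoly m n : is_poly_fun m (fun a => pcoef (Ppoly m a) n).
Proof.
  destruct (Nat.lt_ge_cases n m) as [H|H].
  - apply (is_poly_fun_ext m (fun a => a (m - n)%nat)).
    + intros; rewrite pcoef_Ppoly_lt; auto.
    + apply is_poly_fun_var; lia.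
  - apply (is_poly_fun_ext m (fun _ => C0)).
    + intros; rewrite pcoef_Ppoly_ge; auto.
    + apply is_poly_fun_const.
Qed.

Lemma is_poly_fun_pcoef_ppow_Ppoly m k n : is_poly_fun m (fun a => pcoef (ppow (Ppoly m a) k) n).
Proof.
  revert n; induction k; intros n.
  - exact (is_poly_fun_const m (pcoef (Defs.C1 :: nil) n)).
  - eapply is_poly_fun_ext; [intros; simpl ppow; symmetry; apply pcoef_pmul|].
    apply (is_poly_fun_Csum m
      (fun i a => Cmul (pcoef (Ppoly m a) i) (pcoef (ppow (Ppoly m a) k) (n - i)))).
    intros; apply is_poly_fun_mul; auto; apply is_poly_fun_pcoef_Ppoly.
Qed.

(** * Improper integrals over (0, +oo) *)

(* By the mean value theorem applied to [G] minus a primitive of [|f|]. *)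
Lemma Rabs_RiemannInt_le_primitive (f g G : R -> R) x y (pr : Riemann_integrable f x y) :
  x <= y ->
  (forall t, x <= t <= y -> continuity_pt f t) ->
  (forall t, x <= t <= y -> derivable_pt_lim G t (g t)) ->
  (forall t, x <= t <= y -> Rabs (f t) <= g t) ->
  Rabs (RiemannInt pr) <= G y - G x.
Proof.
  intros Hxy Hc HG Hb.
  assert (Ca : forall t, x <= t <= y -> continuity_pt (fun t => Rabs (f t)) t).
  { intros t Ht; apply (continuity_pt_comp f Rabs); [auto | apply Rcontinuity_abs]. }
  pose (pra := RiemannInt_P16 pr).
  apply Rle_trans with (RiemannInt pra); [apply RiemannInt_P17; auto|].
  rewrite (RiemannInt_P20 Hxy (FTC_P1 Hxy Ca) pra).
  set (P := primitive Hxy (FTC_P1 Hxy Ca)).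
  destruct Hxy as [Hlt|<-]; [|lra].
  assert (D : forall c, x <= c <= y ->
            derivable_pt_lim (fun t => G t - P t) c (g c - Rabs (f c))).
  { intros c Hc'; apply derivable_pt_lim_minus; [auto|].
    apply (RiemannInt_P28 (f := fun t => Rabs (f t))); auto. }
  destruct (MVT_cor2 _ _ x y Hlt D) as [c [Hc1 Hc2]].
  specialize (Hb c ltac:(lra)); nra.
Qed.

Lemma sqrt_inv_succ_small C eps : 0 <= C -> 0 < eps ->
  exists N : nat, C * sqrt (/ (INR N + 1)) < eps.
Proof.
  intros HC He.
  assert (He' : 0 < eps / (C + 1)) by (apply Rdiv_lt_0_compat; lra).
  destruct (archimed_cor1 ((eps / (C + 1)) ^ 2)) as [N [HN HN0]]; [nra|].
  exists N; apply lt_0_INR in HN0.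
  assert (Hx : 0 < / (INR N + 1)) by (apply Rinv_0_lt_compat; lra).
  assert (/ (INR N + 1) < (eps / (C + 1)) ^ 2)
    by (apply Rlt_trans with (/ INR N); [apply Rinv_lt_contravar; nra | exact HN]).
  assert (sqrt (/ (INR N + 1)) < eps / (C + 1)).
  { rewrite <- (sqrt_pow2 (eps / (C + 1))) by lra; apply sqrt_lt_1_alt; lra. }
  pose proof (sqrt_pos (/ (INR N + 1))).
  apply Rle_lt_trans with ((C + 1) * sqrt (/ (INR N + 1))); [nra|].
  replace eps with ((C + 1) * (eps / (C + 1))) by (field; lra).
  apply Rmult_lt_compat_l; lra.
Qed.

Lemma ex_lim_right0_of_sqrt_modulus (F : R -> R) C :
  (forall x x', 0 < x -> x <= x' -> x' <= 1 -> Rabs (F x - F x') <= C * sqrt x') ->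
  exists L, forall eps, 0 < eps ->
    exists d, 0 < d /\ forall x, 0 < x -> x < d -> Rabs (F x - L) < eps.
Proof.
  intros HF.
  assert (HC : 0 <= C).
  { specialize (HF 1 1 ltac:(lra) ltac:(lra) ltac:(lra)).
    rewrite Rminus_diag, Rabs_R0, sqrt_1 in HF; lra. }
  set (xs := fun n : nat => / (INR n + 1)).
  assert (Hxs : forall n, 0 < xs n <= 1).
  { intros n; unfold xs; pose proof (pos_INR n); split; [apply Rinv_0_lt_compat; lra|].
    rewrite <- Rinv_1; apply Rinv_le_contravar; lra. }
  assert (Hmono : forall n p, (n <= p)%nat -> xs p <= xs n).
  { intros n p Hnp; unfold xs; apply le_INR in Hnp; pose proof (pos_INR n).
    apply Rinv_le_contravar; lra. }
  assert (Small : forall eps, 0 < eps -> exists N, C * sqrt (xs N) < eps)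
    by (intros; apply sqrt_inv_succ_small; auto).
  assert (Osc : forall x x' N, 0 < x -> x <= xs N -> 0 < x' -> x' <= xs N ->
            Rabs (F x - F x') <= C * sqrt (xs N)).
  { intros x x' N Hx HxN Hx' Hx'N; pose proof (Hxs N).
    destruct (Rle_dec x x').
    - apply Rle_trans with (C * sqrt x'); [apply HF; lra|].
      apply Rmult_le_compat_l; auto; apply sqrt_le_1_alt; auto.
    - rewrite Rabs_minus_sym; apply Rle_trans with (C * sqrt x); [apply HF; lra|].
      apply Rmult_le_compat_l; auto; apply sqrt_le_1_alt; auto. }
  assert (Cau : Cauchy_crit (fun n => F (xs n))).
  { intros eps He; destruct (Small eps He) as [N HN]; exists N; intros n p Hn Hp.
    unfold Rdist; eapply Rle_lt_trans; [|exact HN].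
    apply Osc; try apply Hxs; apply Hmono; lia. }
  destruct (R_complete _ Cau) as [L HL]; exists L; intros eps He.
  destruct (Small (eps / 2)) as [N HN]; [lra|].
  destruct (HL (eps / 2)) as [N2 HN2]; [lra|].
  exists (xs N); split; [apply Hxs|]; intros x Hx HxN.
  specialize (HN2 (max N N2) ltac:(lia)); unfold Rdist in HN2.
  assert (Rabs (F x - F (xs (max N N2))) <= C * sqrt (xs N)).
  { apply Osc; try lra; try apply Hxs; apply Hmono; lia. }
  replace (F x - L) with ((F x - F (xs (max N N2))) + (F (xs (max N N2)) - L)) by ring.
  eapply Rle_lt_trans; [apply Rabs_triang | lra].
Qed.

Section ContinuousIntegrand.

Variable f : R -> R.
Hypothesis f_cont : forall t, 0 < t -> continuity_pt f t.

Definition integrable_pos x y (hx : 0 < x) (hy : 0 < y) : Riemann_integrable f x y.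
Proof.
  destruct (Rle_dec x y) as [h|h].
  - apply continuity_implies_RiemannInt; auto; intros t Ht; apply f_cont; lra.
  - apply RiemannInt_P1, continuity_implies_RiemannInt; [lra|].
    intros t Ht; apply f_cont; lra.
Defined.

(* The Riemann integral over [x, y] for positive bounds, independent of any proof;
   the value [0] for other bounds is junk. *)
Definition int_pos x y : R :=
  match Rlt_dec 0 x, Rlt_dec 0 y with
  | left hx, left hy => RiemannInt (integrable_pos x y hx hy)
  | _, _ => 0
  end.

Lemma RiemannInt_int_pos x y (pr : Riemann_integrable f x y) :
  0 < x -> 0 < y -> RiemannInt pr = int_pos x y.
Proof.
  intros hx hy; unfold int_pos.
  destruct (Rlt_dec 0 x); [|lra]; destruct (Rlt_dec 0 y); [|lra].
  apply RiemannInt_P5.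
Qed.

Lemma int_pos_chasles x y z : 0 < x -> 0 < y -> 0 < z ->
  int_pos x y + int_pos y z = int_pos x z.
Proof.
  intros hx hy hz.
  rewrite <- (RiemannInt_int_pos x y (integrable_pos x y hx hy)),
    <- (RiemannInt_int_pos y z (integrable_pos y z hy hz)),
    <- (RiemannInt_int_pos x z (integrable_pos x z hx hz)) by auto.
  apply RiemannInt_P26.
Qed.

Lemma int_pos_le_const x y u : 0 < x -> x <= y -> (forall t, x < t < y -> f t <= u) ->
  int_pos x y <= u * (y - x).
Proof.
  intros hx hxy Hu.
  rewrite <- (RiemannInt_int_pos x y (integrable_pos x y hx ltac:(lra))) by lra.
  rewrite <- (RiemannInt_P15 (RiemannInt_P14 x y u)).
  apply RiemannInt_P19; auto.
Qed.

Lemma Rabs_int_pos_le_primitive g G x y : 0 < x -> x <= y ->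
  (forall t, x <= t <= y -> derivable_pt_lim G t (g t)) ->
  (forall t, x <= t <= y -> Rabs (f t) <= g t) ->
  Rabs (int_pos x y) <= G y - G x.
Proof.
  intros hx hxy HG Hb.
  rewrite <- (RiemannInt_int_pos x y (integrable_pos x y hx ltac:(lra))) by lra.
  apply (Rabs_RiemannInt_le_primitive f g G); auto; intros t Ht; apply f_cont; lra.
Qed.

Lemma int_pos_cauchy_at0 A : (forall t, 0 < t -> t <= 1 -> Rabs (f t) <= A / sqrt t) ->
  forall x x', 0 < x -> x <= x' -> x' <= 1 ->
  Rabs (int_pos x 1 - int_pos x' 1) <= 2 * A * sqrt x'.
Proof.
  intros HA x x' hx hxx' hx1.
  replace (int_pos x 1 - int_pos x' 1) with (int_pos x x')
    by (rewrite <- (int_pos_chasles x x' 1) by lra; ring).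
  eapply Rle_trans.
  - apply (Rabs_int_pos_le_primitive (fun t => A / sqrt t) (fun t => 2 * A * sqrt t)); auto.
    + intros t Ht; pose proof (sqrt_lt_R0 t ltac:(lra)).
      replace (A / sqrt t) with (2 * A * / (2 * sqrt t)) by (field; lra).
      apply (derivable_pt_lim_scal sqrt); apply derivable_pt_lim_sqrt; lra.
    + intros t Ht; apply HA; lra.
  - pose proof (sqrt_pos x); assert (0 <= A).
    { specialize (HA 1 ltac:(lra) ltac:(lra)); pose proof (Rabs_pos (f 1)).
      rewrite sqrt_1 in HA; lra. }
    nra.
Qed.

Lemma int_pos_cauchy_at_infty B : (forall t, 1 <= t -> Rabs (f t) <= B / (t * sqrt t)) ->
  forall x x', 0 < x -> x <= x' -> x' <= 1 ->
  Rabs (int_pos 1 (/ x) - int_pos 1 (/ x')) <= 2 * B * sqrt x'.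
Proof.
  intros HB x x' hx hxx' hx1.
  assert (Hy : 1 <= / x') by (rewrite <- Rinv_1; apply Rinv_le_contravar; lra).
  assert (Hyy : / x' <= / x) by (apply Rinv_le_contravar; lra).
  replace (int_pos 1 (/ x) - int_pos 1 (/ x')) with (int_pos (/ x') (/ x))
    by (rewrite <- (int_pos_chasles 1 (/ x') (/ x)) by lra; ring).
  eapply Rle_trans.
  - apply (Rabs_int_pos_le_primitive (fun t => B / (t * sqrt t)) (fun t => - (2 * B) / sqrt t));
      [lra | auto | |].
    + intros t Ht; pose proof (sqrt_lt_R0 t ltac:(lra)); pose proof (sqrt_sqrt t ltac:(lra)).
      replace (B / (t * sqrt t)) with ((0 * sqrt t - / (2 * sqrt t) * (- (2 * B))) / Rsqr (sqrt t))
        by (unfold Rsqr; field_simplify_eq; [nra | lra]).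
      apply (derivable_pt_lim_div (fun _ => - (2 * B)) sqrt);
        [apply derivable_pt_lim_const | apply derivable_pt_lim_sqrt | ]; lra.
    + intros t Ht; apply HB; lra.
  - assert (0 <= B).
    { specialize (HB 1 ltac:(lra)); pose proof (Rabs_pos (f 1)).
      rewrite sqrt_1, Rmult_1_l in HB; lra. }
    pose proof (sqrt_lt_R0 (/ x) ltac:(apply Rinv_0_lt_compat; lra)).
    assert (0 <= 2 * B / sqrt (/ x)) by (apply Rmult_le_pos; [lra | left; apply Rinv_0_lt_compat; lra]).
    rewrite !sqrt_inv; pose proof (sqrt_lt_R0 x' ltac:(lra)).
    replace (- (2 * B) / / sqrt x') with (- (2 * B * sqrt x')) by (field; lra).
    rewrite sqrt_inv in *; lra.
Qed.

End ContinuousIntegrand.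

Lemma is_int_0_inf_of_bounds f A B : (forall t, 0 < t -> continuity_pt f t) ->
  (forall t, 0 < t -> t <= 1 -> Rabs (f t) <= A / sqrt t) ->
  (forall t, 1 <= t -> Rabs (f t) <= B / (t * sqrt t)) ->
  exists l, is_int_0_inf f l.
Proof.
  intros Hc H0 H1.
  destruct (ex_lim_right0_of_sqrt_modulus _ _ (int_pos_cauchy_at0 f Hc A H0)) as [L1 HL1].
  destruct (ex_lim_right0_of_sqrt_modulus _ _ (int_pos_cauchy_at_infty f Hc B H1)) as [L2 HL2].
  exists (L1 + L2); split.
  - intros x y hx hxy; constructor; exact (integrable_pos f Hc x y hx ltac:(lra)).
  - intros eps He.
    destruct (HL1 (eps / 2) ltac:(lra)) as [d1 [Hd1 P1]].
    destruct (HL2 (eps / 2) ltac:(lra)) as [d2 [Hd2 P2]].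
    exists (Rmin d1 1); split; [apply Rmin_pos; lra|].
    exists (Rmax 1 (/ d2)); split; [apply Rlt_le_trans with 1; [lra | apply Rmax_l]|].
    intros x y pr hx hxd hyM.
    pose proof (Rmin_l d1 1); pose proof (Rmax_l 1 (/ d2)); pose proof (Rmax_r 1 (/ d2)).
    assert (Hy : 0 < / y) by (apply Rinv_0_lt_compat; lra).
    specialize (P1 x hx ltac:(lra)).
    specialize (P2 (/ y) Hy).
    rewrite Rinv_inv in P2.
    rewrite (RiemannInt_int_pos f Hc x y pr), <- (int_pos_chasles f Hc x 1 y) by lra.
    replace (int_pos f Hc x 1 + int_pos f Hc 1 y - (L1 + L2))
      with ((int_pos f Hc x 1 - L1) + (int_pos f Hc 1 y - L2)) by ring.
    eapply Rle_lt_trans; [apply Rabs_triang|].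
    enough (Rabs (int_pos f Hc 1 y - L2) < eps / 2) by lra.
    apply P2; rewrite <- (Rinv_inv d2); apply Rinv_lt_contravar; [|lra].
    apply Rmult_lt_0_compat; [apply Rinv_0_lt_compat|]; lra.
Qed.

Lemma is_int_0_inf_unique f l1 l2 : is_int_0_inf f l1 -> is_int_0_inf f l2 -> l1 = l2.
Proof.
  intros [I1 H1] [_ H2].
  destruct (Req_dec l1 l2) as [|Hne]; auto; exfalso.
  set (e := Rabs (l1 - l2) / 2).
  assert (He : 0 < e) by (unfold e; pose proof (Rabs_pos_lt (l1 - l2) ltac:(lra)); lra).
  destruct (H1 e He) as [d1 [Hd1 [M1 [HM1 P1]]]].
  destruct (H2 e He) as [d2 [Hd2 [M2 [HM2 P2]]]].
  set (x := Rmin d1 d2 / 2); set (y := Rmax M1 M2 + x + 1).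
  pose proof (Rmin_l d1 d2); pose proof (Rmin_r d1 d2); pose proof (Rmin_pos d1 d2 Hd1 Hd2).
  pose proof (Rmax_l M1 M2); pose proof (Rmax_r M1 M2).
  destruct (I1 x y ltac:(unfold x; lra) ltac:(unfold y, x; lra)) as [pr].
  specialize (P1 x y pr ltac:(unfold x; lra) ltac:(unfold x; lra) ltac:(unfold y, x; lra)).
  specialize (P2 x y pr ltac:(unfold x; lra) ltac:(unfold x; lra) ltac:(unfold y, x; lra)).
  assert (Rabs (l1 - l2) < 2 * e).
  { replace (l1 - l2) with (- (RiemannInt pr - l1) + (RiemannInt pr - l2)) by ring.
    eapply Rle_lt_trans; [apply Rabs_triang|]; rewrite Rabs_Ropp; lra. }
  unfold e in *; lra.
Qed.

Lemma Int0inf_eq f l : is_int_0_inf f l -> Int0inf f = l.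
Proof.
  intros H; apply (is_int_0_inf_unique f); [|exact H].
  apply (epsilon_spec (inhabits 0) (is_int_0_inf f)); eauto.
Qed.

Lemma is_int_0_inf_Int0inf f l : is_int_0_inf f l -> is_int_0_inf f (Int0inf f).
Proof. intros H; rewrite (Int0inf_eq f l H); exact H. Qed.

Lemma is_int_0_inf_0 : is_int_0_inf (fun _ => 0) 0.
Proof.
  split.
  - intros x y _ _; constructor; apply RiemannInt_P14.
  - intros eps He; exists 1; split; [lra|]; exists 1; split; [lra|].
    intros x y pr _ _ _.
    assert (E : RiemannInt pr = 0).
    { pose proof (RiemannInt_P15 (RiemannInt_P14 x y 0)) as E; rewrite Rmult_0_l in E.
      rewrite <- E; apply (RiemannInt_P5 (f := fun _ => 0)). }
    rewrite E, Rminus_0_r, Rabs_R0; auto.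
Qed.

Lemma is_int_0_inf_lin f g h c l1 l2 :
  is_int_0_inf f l1 -> is_int_0_inf g l2 ->
  (forall t, 0 < t -> h t = f t * c + g t) -> is_int_0_inf h (l1 * c + l2).
Proof.
  intros [If Hf] [Ig Hg] Hh.
  assert (Ih : forall x y, 0 < x -> x <= y -> Riemann_integrable f x y ->
            Riemann_integrable g x y -> Riemann_integrable h x y).
  { intros x y hx hxy pf pg.
    refine (@Riemann_integrable_ext (fun t => g t + c * f t) h x y _ (RiemannInt_P10 c pg pf)).
    intros t Ht; rewrite Hh; [ring|]; unfold Rmin in Ht; destruct (Rle_dec x y); lra. }
  split.
  - intros x y hx hxy; destruct (If x y hx hxy) as [pf]; destruct (Ig x y hx hxy) as [pg].
    constructor; auto.
  - intros eps He; set (e' := eps / (2 * (Rabs c + 1))).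
    assert (He' : 0 < e') by (unfold e'; pose proof (Rabs_pos c); apply Rdiv_lt_0_compat; lra).
    destruct (Hf e' He') as [d1 [Hd1 [M1 [HM1 P1]]]].
    destruct (Hg (eps / 2) ltac:(lra)) as [d2 [Hd2 [M2 [HM2 P2]]]].
    exists (Rmin 1 (Rmin d1 d2)); split; [repeat apply Rmin_pos; lra|].
    exists (Rmax 1 (Rmax M1 M2)); split; [pose proof (Rmax_l 1 (Rmax M1 M2)); lra|].
    intros x y pr hx hxd hyM.
    pose proof (Rmin_l 1 (Rmin d1 d2)); pose proof (Rmin_r 1 (Rmin d1 d2)).
    pose proof (Rmin_l d1 d2); pose proof (Rmin_r d1 d2).
    pose proof (Rmax_l 1 (Rmax M1 M2)); pose proof (Rmax_r 1 (Rmax M1 M2)).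
    pose proof (Rmax_l M1 M2); pose proof (Rmax_r M1 M2).
    assert (hxy : x <= y) by lra.
    destruct (If x y hx hxy) as [pf]; destruct (Ig x y hx hxy) as [pg].
    specialize (P1 x y pf hx ltac:(lra) ltac:(lra)); specialize (P2 x y pg hx ltac:(lra) ltac:(lra)).
    pose (p3 := RiemannInt_P10 c pg pf).
    rewrite (RiemannInt_P18 pr p3 hxy) by (intros t Ht; rewrite Hh by lra; ring).
    rewrite (RiemannInt_P13 pg pf p3).
    replace (RiemannInt pg + c * RiemannInt pf - (l1 * c + l2))
      with (c * (RiemannInt pf - l1) + (RiemannInt pg - l2)) by ring.
    eapply Rle_lt_trans; [apply Rabs_triang|]; rewrite Rabs_mult.
    assert (Rabs c * Rabs (RiemannInt pf - l1) <= Rabs c * e')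
      by (apply Rmult_le_compat_l; [apply Rabs_pos | lra]).
    assert (Rabs c * e' < eps / 2).
    { unfold e'; pose proof (Rabs_pos c).
      apply Rmult_lt_reg_r with (2 * (Rabs c + 1)); [lra|]; field_simplify; lra. }
    lra.
Qed.

(* The integral over [x, y] with [x < 1 < 2 < y] is at most the integral over [1, 2],
   which is bounded away from 0 by the maximum of [f] on [1, 2]. *)
Lemma is_int_0_inf_neg f l : (forall t, 0 < t -> continuity_pt f t) ->
  is_int_0_inf f l -> (forall t, 0 < t -> f t < 0) -> l < 0.
Proof.
  intros Hc [I H] Hneg.
  destruct (continuity_ab_maj f 1 2) as [c [Hmax Hc12]]; [lra | intros; apply Hc; lra|].
  assert (Hfc : f c < 0) by (apply Hneg; lra).
  destruct (H (- f c / 2)) as [d [Hd [M [HM P]]]]; [lra|].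
  set (x := Rmin d 1 / 2); set (y := Rmax M 2 + 1).
  pose proof (Rmin_l d 1); pose proof (Rmin_r d 1); pose proof (Rmin_pos d 1 Hd ltac:(lra)).
  pose proof (Rmax_l M 2); pose proof (Rmax_r M 2).
  assert (hx : 0 < x) by (unfold x; lra).
  destruct (I x y hx ltac:(unfold x, y; lra)) as [pr].
  specialize (P x y pr hx ltac:(unfold x; lra) ltac:(unfold y; lra)).
  rewrite (RiemannInt_int_pos f Hc x y pr) in P by (unfold y; lra).
  rewrite <- (int_pos_chasles f Hc x 2 y), <- (int_pos_chasles f Hc x 1 2) in P
    by (unfold y; lra).
  assert (int_pos f Hc x 1 <= 0 * (1 - x))
    by (apply int_pos_le_const; [lra | unfold x; lra | intros t Ht; left; apply Hneg; lra]).
  assert (int_pos f Hc 1 2 <= f c * (2 - 1))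
    by (apply int_pos_le_const; [lra | lra | intros t Ht; apply Hmax; lra]).
  assert (int_pos f Hc 2 y <= 0 * (y - 2))
    by (apply int_pos_le_const; [lra | unfold y; lra | intros t Ht; left; apply Hneg; lra]).
  apply Rabs_def2 in P; lra.
Qed.

Lemma is_int_0_inf_pos f l : (forall t, 0 < t -> continuity_pt f t) ->
  is_int_0_inf f l -> (forall t, 0 < t -> 0 < f t) -> 0 < l.
Proof.
  intros Hc Hi Hpos.
  assert (Hn : is_int_0_inf (fun t => - f t) (l * (-1) + 0))
    by (apply (is_int_0_inf_lin f (fun _ => 0)); auto using is_int_0_inf_0; intros; ring).
  enough (l * (-1) + 0 < 0) by lra.
  apply (is_int_0_inf_neg (fun t => - f t)); auto.
  - intros t ht; apply continuity_pt_opp; auto.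
  - intros t ht; specialize (Hpos t ht); lra.
Qed.

(** * The integrands *)

Lemma sqrt_pow t n : 0 <= t -> sqrt (t ^ n) = sqrt t ^ n.
Proof.
  intros Ht; induction n; simpl; [apply sqrt_1|].
  rewrite sqrt_mult_alt, IHn; auto.
Qed.

Lemma pow_sqrt_double t n : 0 <= t -> t ^ n = sqrt t ^ (2 * n).
Proof. intros Ht; rewrite pow_mult; simpl; rewrite Rmult_1_r, sqrt_sqrt; auto. Qed.

Lemma sqrt_ge_one x : 1 <= x -> 1 <= sqrt x.
Proof. intros H; rewrite <- sqrt_1; apply sqrt_le_1_alt; auto. Qed.

Lemma sqrt_le_one x : x <= 1 -> sqrt x <= 1.
Proof. intros H; rewrite <- sqrt_1; apply sqrt_le_1_alt; auto. Qed.

Lemma pow_le_one x n : 0 <= x <= 1 -> x ^ n <= 1.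
Proof. intros Hx; rewrite <- (pow1 n); apply pow_incr; auto. Qed.

Lemma pow_div_pow_le_small p a b c : 0 < p <= 1 -> (b <= a + c)%nat ->
  p ^ a / p ^ b <= 1 / p ^ c.
Proof.
  intros Hp Hab; pose proof (pow_lt p b (proj1 Hp)); pose proof (pow_lt p c (proj1 Hp)).
  assert (p ^ (a + c) <= p ^ b).
  { replace (a + c)%nat with (b + (a + c - b))%nat by lia; rewrite pow_add.
    assert (p ^ (a + c - b) <= 1) by (apply pow_le_one; lra).
    nra. }
  rewrite pow_add in H1; apply Rmult_le_reg_r with (p ^ b * p ^ c); [nra|].
  replace (p ^ a / p ^ b * (p ^ b * p ^ c)) with (p ^ a * p ^ c) by (field; lra).
  replace (1 / p ^ c * (p ^ b * p ^ c)) with (p ^ b) by (field; lra); lra.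
Qed.

Lemma pow_div_pow_le_large p a b c : 1 <= p -> (a + c <= b)%nat ->
  p ^ a / p ^ b <= 1 / p ^ c.
Proof.
  intros Hp Hab; pose proof (pow_lt p b ltac:(lra)); pose proof (pow_lt p c ltac:(lra)).
  assert (p ^ (a + c) <= p ^ b) by (apply Rle_pow; auto).
  rewrite pow_add in H1; apply Rmult_le_reg_r with (p ^ b * p ^ c); [nra|].
  replace (p ^ a / p ^ b * (p ^ b * p ^ c)) with (p ^ a * p ^ c) by (field; lra).
  replace (1 / p ^ c * (p ^ b * p ^ c)) with (p ^ b) by (field; lra); lra.
Qed.

Lemma Rpower_half_sub_nat w k : 0 < w -> Rpower w (- (INR k - 1 / 2)) = sqrt w / w ^ k.
Proof.
  intros Hw; replace (- (INR k - 1 / 2)) with (/ 2 + - INR k) by field.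
  rewrite Rpower_plus, Rpower_sqrt, Rpower_Ropp, Rpower_pow by auto; reflexivity.
Qed.

Lemma Rpower_half_nat_sub_nat t m j : 0 < t ->
  Rpower t (INR m / 2 - INR j) = sqrt (t ^ m) / t ^ j.
Proof.
  intros Ht; replace (INR m / 2 - INR j) with (/ 2 * INR m + - INR j) by field.
  rewrite Rpower_plus, Rpower_Ropp, Rpower_pow by auto.
  rewrite <- Rpower_mult, Rpower_sqrt, Rpower_pow, sqrt_pow by first [apply sqrt_lt_R0; lra | lra].
  reflexivity.
Qed.

Definition gcore k s := s ^ k * sqrt (s + 1) / (s + 1) ^ k.

Lemma gcore_eq k s : 0 <= s -> gcore k s = (s / (s + 1)) ^ k * sqrt (s + 1).
Proof. intros Hs; unfold gcore, Rdiv; rewrite Rpow_mult_distr, pow_inv; ring. Qed.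

Lemma ratio_succ_bounds s : 0 <= s -> 0 <= s / (s + 1) <= 1.
Proof.
  intros Hs; split; [apply Rle_mult_inv_pos; lra|].
  replace (s / (s + 1)) with (1 - / (s + 1)) by (field; lra).
  pose proof (Rinv_0_lt_compat (s + 1) ltac:(lra)); lra.
Qed.

Lemma gcore_nonneg k s : 0 <= s -> 0 <= gcore k s.
Proof.
  intros Hs; rewrite gcore_eq by auto.
  apply Rmult_le_pos; [apply pow_le, ratio_succ_bounds | apply sqrt_pos]; auto.
Qed.

Lemma gcore_le_sqrt k s : 0 <= s -> (1 <= k)%nat -> gcore k s <= sqrt s.
Proof.
  intros Hs Hk; rewrite gcore_eq by auto.
  pose proof (ratio_succ_bounds s Hs) as Hr.
  pose proof (sqrt_lt_R0 (s + 1) ltac:(lra)); pose proof (sqrt_pos s).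
  pose proof (sqrt_sqrt s Hs); pose proof (sqrt_sqrt (s + 1) ltac:(lra)).
  assert (sqrt s <= sqrt (s + 1)) by (apply sqrt_le_1_alt; lra).
  apply Rle_trans with (s / (s + 1) * sqrt (s + 1)).
  - apply Rmult_le_compat_r; [lra|].
    replace k with (1 + (k - 1))%nat by lia; rewrite pow_add, pow_1.
    assert ((s / (s + 1)) ^ (k - 1) <= 1) by (apply pow_le_one; lra).
    nra.
  - apply Rmult_le_reg_r with (s + 1); [lra|].
    replace (s / (s + 1) * sqrt (s + 1) * (s + 1)) with (s * sqrt (s + 1)) by (field; lra).
    nra.
Qed.

Lemma gcore_1_lt_sqrt s : 0 < s -> gcore 1 s < sqrt s.
Proof.
  intros Hs; unfold gcore; rewrite !pow_1.
  pose proof (sqrt_lt_R0 s Hs); pose proof (sqrt_sqrt s ltac:(lra)).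
  pose proof (sqrt_sqrt (s + 1) ltac:(lra)).
  assert (sqrt s < sqrt (s + 1)) by (apply sqrt_lt_1_alt; lra).
  apply Rmult_lt_reg_r with (s + 1); [lra|].
  replace (s * sqrt (s + 1) / (s + 1) * (s + 1)) with (s * sqrt (s + 1)) by (field; lra).
  nra.
Qed.

(* Bernoulli's inequality [1 - r^k <= k (1 - r)] with [r = s / (s + 1)]. *)
Lemma sqrt_sub_gcore_le k s : 0 <= s -> sqrt s - gcore k s <= INR k / sqrt (s + 1).
Proof.
  intros Hs; rewrite gcore_eq by auto; set (r := s / (s + 1)).
  pose proof (ratio_succ_bounds s Hs) as Hr; fold r in Hr.
  assert (Bern : 1 - r ^ k <= INR k * (1 - r)).
  { induction k; [simpl; lra|].
    rewrite S_INR; simpl.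
    assert (r ^ k <= 1) by (apply pow_le_one; lra).
    pose proof (pow_le r k (proj1 Hr)); nra. }
  assert (E : 1 - r = / (s + 1)) by (unfold r; field; lra).
  pose proof (sqrt_lt_R0 (s + 1) ltac:(lra)); pose proof (sqrt_sqrt (s + 1) ltac:(lra)).
  assert (sqrt s <= sqrt (s + 1)) by (apply sqrt_le_1_alt; lra).
  apply Rle_trans with ((1 - r ^ k) * sqrt (s + 1)); [nra|].
  apply Rle_trans with (INR k * / (s + 1) * sqrt (s + 1)).
  - rewrite <- E; apply Rmult_le_compat_r; lra.
  - right; field_simplify_eq; [nra | lra].
Qed.

Definition gterm m j k t := t ^ (m * k - j) * Rpower (t ^ m + 1) (- (INR k - 1 / 2)).

Definition gterm_sub m j k t := gterm m j k t - Rpower t (INR m / 2 - INR j).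

Lemma gterm_pos m j k t : 0 < t -> 0 < gterm m j k t.
Proof. intros Ht; apply Rmult_lt_0_compat; [apply pow_lt; auto | apply exp_pos]. Qed.

Lemma gterm_gcore m j k t : 0 < t -> (j <= m * k)%nat ->
  gterm m j k t = gcore k (t ^ m) / t ^ j.
Proof.
  intros Ht Hjk; pose proof (pow_lt t m Ht); pose proof (pow_lt t j Ht).
  pose proof (pow_lt (t ^ m + 1) k ltac:(lra)).
  unfold gterm, gcore; rewrite Rpower_half_sub_nat, <- pow_mult by lra.
  replace (t ^ (m * k)) with (t ^ (m * k - j) * t ^ j)
    by (rewrite <- pow_add; f_equal; lia).
  field; lra.
Qed.

Lemma gterm_sub_gcore m j k t : 0 < t -> (j <= m * k)%nat ->
  gterm_sub m j k t = - ((sqrt (t ^ m) - gcore k (t ^ m)) / t ^ j).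
Proof.
  intros Ht Hjk; pose proof (pow_lt t j Ht).
  unfold gterm_sub; rewrite gterm_gcore, Rpower_half_nat_sub_nat by auto; field; lra.
Qed.

Lemma continuity_pt_Rpower g c t : continuity_pt g t -> 0 < g t ->
  continuity_pt (fun s => Rpower (g s) c) t.
Proof.
  intros Hg Hpos; unfold Rpower.
  apply (continuity_pt_comp (fun s => c * ln (g s)) exp).
  - apply (continuity_pt_mult (fun _ => c) (fun s => ln (g s))); [apply continuity_pt_const; now intros ? ?|].
    apply (continuity_pt_comp g ln); auto.
    apply derivable_continuous_pt; exists (/ g t); apply derivable_pt_lim_ln; auto.
  - apply derivable_continuous_pt, derivable_pt_exp.
Qed.

Lemma continuity_pt_gterm m j k t : 0 < t -> continuity_pt (gterm m j k) t.
Proof.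
  intros Ht; pose proof (pow_lt t m Ht).
  apply (continuity_pt_mult (fun s => s ^ (m * k - j))); [apply derivable_continuous_pt, derivable_pt_pow|].
  apply (continuity_pt_Rpower (fun s => s ^ m + 1)); [|lra].
  apply (continuity_pt_plus (fun s => s ^ m)); [apply derivable_continuous_pt, derivable_pt_pow|].
  apply continuity_pt_const; now intros ? ?.
Qed.

Lemma continuity_pt_gterm_sub m j k t : 0 < t -> continuity_pt (gterm_sub m j k) t.
Proof.
  intros Ht; apply (continuity_pt_minus (gterm m j k)); [apply continuity_pt_gterm; auto|].
  apply (continuity_pt_Rpower (fun s => s)); auto; apply derivable_continuous_pt, derivable_pt_id.
Qed.

Lemma gterm_sub_1_neg m j t : (1 <= j <= m)%nat -> 0 < t -> gterm_sub m j 1 t < 0.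
Proof.
  intros Hj Ht; rewrite gterm_sub_gcore by (auto; lia).
  pose proof (pow_lt t m Ht); pose proof (pow_lt t j Ht).
  pose proof (gcore_1_lt_sqrt (t ^ m) H).
  enough (0 < (sqrt (t ^ m) - gcore 1 (t ^ m)) / t ^ j) by lra.
  apply Rdiv_pos_pos; lra.
Qed.

Lemma Rabs_gterm_sub m j k t : 0 < t -> (1 <= k)%nat -> (j <= m * k)%nat ->
  Rabs (gterm_sub m j k t) = (sqrt (t ^ m) - gcore k (t ^ m)) / t ^ j.
Proof.
  intros Ht Hk Hjk; pose proof (pow_lt t m Ht); pose proof (pow_lt t j Ht).
  pose proof (gcore_le_sqrt k (t ^ m) ltac:(lra) Hk).
  rewrite gterm_sub_gcore, Rabs_Ropp by auto.
  apply Rabs_right, Rle_ge, Rle_mult_inv_pos; lra.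
Qed.

Lemma gterm_sub_bound_at0 m j k t : (1 <= k)%nat -> (2 * j <= m + 1)%nat ->
  0 < t -> t <= 1 -> Rabs (gterm_sub m j k t) <= 1 / sqrt t.
Proof.
  intros Hk H2j Ht Ht1; rewrite Rabs_gterm_sub by (auto; nia).
  pose proof (pow_lt t j Ht); pose proof (pow_lt t m Ht).
  pose proof (gcore_nonneg k (t ^ m) ltac:(lra)).
  apply Rle_trans with (sqrt (t ^ m) / t ^ j).
  - apply Rmult_le_compat_r; [left; apply Rinv_0_lt_compat|]; lra.
  - rewrite sqrt_pow, (pow_sqrt_double t j) by lra.
    replace (1 / sqrt t) with (1 / sqrt t ^ 1) by (rewrite pow_1; reflexivity).
    apply pow_div_pow_le_small; [|lia].
    split; [apply sqrt_lt_R0 | apply sqrt_le_one]; lra.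
Qed.

Lemma div_sqrt_pow_le_at_infty c s t j : 0 <= c -> 1 <= t -> t <= s -> (1 <= j)%nat ->
  c / sqrt s / t ^ j <= c / (t * sqrt t).
Proof.
  intros Hc Ht Hts Hj; pose proof (sqrt_lt_R0 t ltac:(lra)).
  assert (sqrt t <= sqrt s) by (apply sqrt_le_1_alt; lra).
  assert (t <= t ^ j) by (rewrite <- (pow_1 t) at 1; apply Rle_pow; auto).
  unfold Rdiv; rewrite Rmult_assoc, <- Rinv_mult.
  apply Rmult_le_compat_l; auto; apply Rinv_le_contravar; [nra|].
  rewrite Rmult_comm; apply Rmult_le_compat; lra.
Qed.

Lemma gterm_sub_bound_at_infty m j k t : (1 <= j)%nat -> (1 <= k)%nat ->
  (2 * j <= m + 1)%nat -> 1 <= t -> Rabs (gterm_sub m j k t) <= INR k / (t * sqrt t).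
Proof.
  intros Hj Hk H2j Ht; rewrite Rabs_gterm_sub by (lra || nia).
  pose proof (pow_lt t j ltac:(lra)); pose proof (pow_lt t m ltac:(lra)).
  pose proof (sqrt_sub_gcore_le k (t ^ m) ltac:(lra)).
  apply Rle_trans with (INR k / sqrt (t ^ m + 1) / t ^ j).
  - apply Rmult_le_compat_r; [left; apply Rinv_0_lt_compat|]; lra.
  - apply div_sqrt_pow_le_at_infty; auto using pos_INR.
    assert (t <= t ^ m) by (rewrite <- (pow_1 t) at 1; apply Rle_pow; auto; lia); lra.
Qed.

Lemma Rpower_half_sub_nat_le w k : 1 <= w -> (1 <= k)%nat ->
  Rpower w (- (INR k - 1 / 2)) <= / sqrt w.
Proof.
  intros Hw Hk; rewrite Rpower_half_sub_nat by lra.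
  pose proof (sqrt_lt_R0 w ltac:(lra)); pose proof (sqrt_sqrt w ltac:(lra)).
  assert (w <= w ^ k) by (rewrite <- (pow_1 w) at 1; apply Rle_pow; auto).
  pose proof (pow_lt w k ltac:(lra)).
  apply Rmult_le_reg_r with (w ^ k * sqrt w); [nra|].
  replace (sqrt w / w ^ k * (w ^ k * sqrt w)) with w by (field_simplify_eq; nra).
  replace (/ sqrt w * (w ^ k * sqrt w)) with (w ^ k) by (field; lra); lra.
Qed.

Lemma gterm_bound_at0 m j k t : (1 <= k)%nat -> 0 < t -> t <= 1 ->
  Rabs (gterm m j k t) <= 1 / sqrt t.
Proof.
  intros Hk Ht Ht1; rewrite Rabs_right by (left; apply gterm_pos; auto).
  pose proof (pow_lt t m Ht); pose proof (pow_lt t (m * k - j) Ht); pose proof (sqrt_lt_R0 t Ht).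
  assert (1 <= 1 / sqrt t).
  { unfold Rdiv; rewrite Rmult_1_l, <- Rinv_1; apply Rinv_le_contravar; [lra|].
    apply sqrt_le_one; lra. }
  assert (t ^ (m * k - j) <= 1) by (apply pow_le_one; lra).
  pose proof (Rpower_half_sub_nat_le (t ^ m + 1) k ltac:(lra) Hk).
  assert (/ sqrt (t ^ m + 1) <= 1).
  { rewrite <- Rinv_1; apply Rinv_le_contravar; [lra|]; apply sqrt_ge_one; lra. }
  assert (0 < Rpower (t ^ m + 1) (- (INR k - 1 / 2))) by apply exp_pos.
  unfold gterm; nra.
Qed.

Lemma gterm_bound_at_infty m j k t : (3 <= m)%nat -> (1 <= k)%nat -> (m + 3 <= 2 * j)%nat ->
  1 <= t -> Rabs (gterm m j k t) <= 1 / (t * sqrt t).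
Proof.
  intros Hm Hk H2j Ht; rewrite Rabs_right by (left; apply gterm_pos; lra).
  pose proof (pow_lt t m ltac:(lra)); pose proof (sqrt_lt_R0 t ltac:(lra)).
  assert (Hp : 1 <= sqrt t) by (apply sqrt_ge_one; lra).
  assert (E3 : t * sqrt t = sqrt t ^ 3).
  { pose proof (sqrt_sqrt t ltac:(lra)); simpl; nra. }
  rewrite E3; destruct (Nat.le_gt_cases j (m * k)) as [Hjk|Hjk].
  - rewrite gterm_gcore by (lra || auto).
    pose proof (pow_lt t j ltac:(lra)); pose proof (gcore_le_sqrt k (t ^ m) ltac:(lra) Hk).
    apply Rle_trans with (sqrt (t ^ m) / t ^ j).
    + apply Rmult_le_compat_r; [left; apply Rinv_0_lt_compat|]; lra.
    + rewrite sqrt_pow, (pow_sqrt_double t j) by lra.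
      apply pow_div_pow_le_large; [lra | lia].
  - unfold gterm; replace (m * k - j)%nat with 0%nat by lia; rewrite pow_O, Rmult_1_l.
    eapply Rle_trans; [apply Rpower_half_sub_nat_le; [lra | auto]|].
    pose proof (pow_lt (sqrt t) 3 ltac:(lra)).
    assert (sqrt t ^ 3 <= sqrt (t ^ m + 1)).
    { apply Rle_trans with (sqrt t ^ m); [apply Rle_pow; auto|].
      rewrite <- sqrt_pow by lra; apply sqrt_le_1_alt; lra. }
    unfold Rdiv; rewrite Rmult_1_l; apply Rinv_le_contravar; lra.
Qed.

(* [Kintegrand m j k] is w_{j,k} of the header and, for 2j <> m + 2, [Kweight m j k] is I_{j,k}. *)
Definition Kintegrand m j k : R -> R :=
  if Nat.leb (2 * j) (m + 1) then gterm_sub m j k else gterm m j k.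

Definition Kweight m j k : R := Int0inf (Kintegrand m j k).

Lemma continuity_pt_Kintegrand m j k t : 0 < t -> continuity_pt (Kintegrand m j k) t.
Proof.
  unfold Kintegrand; destruct (Nat.leb _ _);
    auto using continuity_pt_gterm, continuity_pt_gterm_sub.
Qed.

Lemma is_int_0_inf_Kintegrand m j k : (3 <= m)%nat -> (1 <= j)%nat -> (2 * j <> m + 2)%nat ->
  (1 <= k)%nat -> is_int_0_inf (Kintegrand m j k) (Kweight m j k).
Proof.
  intros Hm Hj Hne Hk.
  assert (Hex : exists l, is_int_0_inf (Kintegrand m j k) l).
  { unfold Kintegrand; destruct (Nat.leb_spec (2 * j) (m + 1)).
    - apply (is_int_0_inf_of_bounds _ 1 (INR k) (continuity_pt_gterm_sub m j k)).
      + intros; apply gterm_sub_bound_at0; auto.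
      + intros; apply gterm_sub_bound_at_infty; auto.
    - apply (is_int_0_inf_of_bounds _ 1 1 (continuity_pt_gterm m j k)).
      + intros; apply gterm_bound_at0; auto.
      + intros; apply gterm_bound_at_infty; auto; lia. }
  destruct Hex as [l Hl]; exact (is_int_0_inf_Int0inf _ _ Hl).
Qed.

Lemma Kweight_1_neq0 m j : (3 <= m)%nat -> (1 <= j <= m)%nat -> (2 * j <> m + 2)%nat ->
  Kweight m j 1 <> 0.
Proof.
  intros Hm Hj Hne; pose proof (is_int_0_inf_Kintegrand m j 1 Hm ltac:(lia) Hne ltac:(lia)) as H.
  pose proof (continuity_pt_Kintegrand m j 1) as Hc.
  unfold Kintegrand in *; destruct (Nat.leb _ _).
  - enough (Kweight m j 1 < 0) by lra.
    apply (is_int_0_inf_neg _ _ Hc H); intros; apply gterm_sub_1_neg; auto.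
  - enough (0 < Kweight m j 1) by lra.
    apply (is_int_0_inf_pos _ _ Hc H); intros; apply gterm_pos; auto.
Qed.

Lemma is_int_0_inf_Csum_scale {A} (w : A -> R -> R) (I : A -> R) (c : A -> Cplx) l :
  (forall k, In k l -> is_int_0_inf (w k) (I k)) ->
  is_int_0_inf (fun t => fst (Csum (fun k => Cscale (w k t) (c k)) l))
               (fst (Csum (fun k => Cscale (I k) (c k)) l)) /\
  is_int_0_inf (fun t => snd (Csum (fun k => Cscale (w k t) (c k)) l))
               (snd (Csum (fun k => Cscale (I k) (c k)) l)).
Proof.
  induction l as [|k l IH]; intros H; [split; apply is_int_0_inf_0|].
  assert (Hk : is_int_0_inf (w k) (I k)) by (apply H; simpl; auto).
  destruct IH as [IH1 IH2]; [intros; apply H; simpl; auto|].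
  split; [apply (is_int_0_inf_lin _ _ _ _ _ _ Hk IH1) | apply (is_int_0_inf_lin _ _ _ _ _ _ Hk IH2)];
    reflexivity.
Qed.

Lemma CInt0inf_Csum_scale {A} (w : A -> R -> R) (I : A -> R) (c : A -> Cplx) l :
  (forall k, In k l -> is_int_0_inf (w k) (I k)) ->
  CInt0inf (fun t => Csum (fun k => Cscale (w k t) (c k)) l)
  = Csum (fun k => Cscale (I k) (c k)) l.
Proof.
  intros H; destruct (is_int_0_inf_Csum_scale w I c l H) as [H1 H2].
  unfold CInt0inf; rewrite (Int0inf_eq _ _ H1), (Int0inf_eq _ _ H2).
  destruct (Csum _ l); reflexivity.
Qed.

Definition bsum m j (w : nat -> R) (a : nat -> Cplx) : Cplx :=
  Csum (fun k => Cscale (w k) (bjk m a j k)) (seq 1 j).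

Lemma Kmj_bsum m a j : (3 <= m)%nat -> (1 <= j)%nat -> (2 * j <> m + 2)%nat ->
  Kmj m a j = bsum m j (Kweight m j) a.
Proof.
  intros Hm Hj Hne; unfold Kmj, bsum.
  replace (Nat.eqb j 0) with false by (symmetry; apply Nat.eqb_neq; lia).
  replace (Nat.eqb (2 * j) (m + 2)) with false by (symmetry; apply Nat.eqb_neq; auto).
  rewrite Bool.andb_false_r.
  rewrite <- (CInt0inf_Csum_scale (Kintegrand m j) (Kweight m j) (bjk m a j))
    by (intros k Hk; apply in_seq in Hk; apply is_int_0_inf_Kintegrand; auto; lia).
  unfold Kintegrand; destruct (Nat.leb _ _); [|reflexivity].
  f_equal; apply functional_extensionality; intros t.
  unfold gterm_sub; rewrite Csum_scale_sub; reflexivity.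
Qed.

(** * The coefficients c_j *)

Lemma is_poly_fun_bjk m j k : is_poly_fun m (fun a => bjk m a j k).
Proof.
  unfold bjk; destruct (Nat.ltb (m * k) j);
    [apply is_poly_fun_const | apply is_poly_fun_scale, is_poly_fun_pcoef_ppow_Ppoly].
Qed.

(* [b_{j,k}] is the coefficient of [z^(mk-j)] in [P^k], of degree [(m-1)k], so only
   [a_1, ..., a_(j-k+1)] enter it. *)
Lemma bjk_local m a a' j k J : (1 <= m)%nat -> (forall i, (1 <= i <= J)%nat -> a i = a' i) ->
  (j + 1 <= k + J)%nat -> bjk m a j k = bjk m a' j k.
Proof.
  intros Hm H HJ; unfold bjk; destruct (Nat.ltb_spec (m * k) j); [reflexivity|].
  f_equal; apply (pcoef_ppow_Ppoly_local m a a' J); auto.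
  rewrite Nat.mul_sub_distr_r, Nat.mul_1_l; nia.
Qed.

Lemma bjk_upd_ge2 m a j k x : (1 <= j)%nat -> (2 <= k)%nat -> (1 <= m)%nat ->
  bjk m (upd a j x) j k = bjk m a j k.
Proof.
  intros Hj Hk Hm; apply (bjk_local m _ _ j k (j - 1)); [auto| |lia].
  intros i Hi; unfold upd; destruct (Nat.eqb_spec i j); [lia | reflexivity].
Qed.

Lemma bjk_upd_1 m a j x : (1 <= j <= m)%nat -> bjk m (upd a j x) j 1 = Cscale (1 / 2) x.
Proof.
  intros Hj; unfold bjk; destruct (Nat.ltb_spec (m * 1) j); [lia|].
  replace (binom_half 1) with (1 / 2) by (unfold binom_half; simpl; field).
  f_equal; simpl ppow; rewrite pcoef_pmul_C1, pcoef_Ppoly_lt by lia.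
  unfold upd; replace (m - (m * 1 - j))%nat with j by lia; rewrite Nat.eqb_refl; reflexivity.
Qed.

Lemma is_poly_fun_bsum m j w : is_poly_fun m (bsum m j w).
Proof.
  apply (is_poly_fun_Csum m (fun k a => Cscale (w k) (bjk m a j k))).
  intros; apply is_poly_fun_scale, is_poly_fun_bjk.
Qed.

Lemma bsum_local m j w a a' : (1 <= m)%nat ->
  (forall i, (1 <= i <= j)%nat -> a i = a' i) -> bsum m j w a = bsum m j w a'.
Proof.
  intros Hm H; apply Csum_ext; intros k Hk; apply in_seq in Hk.
  f_equal; apply (bjk_local m a a' j k j); auto; lia.
Qed.

Lemma bsum_upd m j w a x : (1 <= j <= m)%nat ->
  bsum m j w (upd a j x)
  = Cadd (Cmul (RtoC (w 1%nat / 2)) x) (Csum (fun k => Cscale (w k) (bjk m a j k)) (seq 2 (j - 1))).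
Proof.
  intros Hj; unfold bsum.
  replace (seq 1 j) with (1%nat :: seq 2 (j - 1)) by (destruct j; [lia | simpl; rewrite Nat.sub_0_r; reflexivity]).
  rewrite Csum_cons.
  rewrite bjk_upd_1 by auto.
  rewrite (Csum_ext _ (fun k => Cscale (w k) (bjk m a j k)))
    by (intros k Hk; apply in_seq in Hk; rewrite bjk_upd_ge2 by lia; reflexivity).
  rewrite !Cscale_Cmul; replace (w 1%nat / 2) with (w 1%nat * (1 / 2)) by field.
  rewrite RtoC_mult; ring.
Qed.

Definition cj_scale m j : R :=
  if Nat.eqb (2 * j) (m + 2) then - / INR m else / PI * cos ((INR j - 1) * PI / INR m).

Definition cj_weight m j : nat -> R :=
  if Nat.eqb (2 * j) (m + 2) then fun _ => 1 else Kweight m j.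

Lemma Cscale_1 x : Cscale 1 x = x.
Proof. destruct x; unfold Cscale; simpl; f_equal; ring. Qed.

Lemma cj_bsum m j a : (3 <= m)%nat -> (1 <= j)%nat ->
  cj m j a = Cscale (cj_scale m j) (bsum m j (cj_weight m j) a).
Proof.
  intros Hm Hj; unfold cj, cj_scale, cj_weight.
  destruct (Nat.eqb_spec (2 * j) (m + 2)) as [E|E].
  - assert (Ev : Nat.even m = true)
      by (replace m with (2 * (j - 1))%nat by lia; apply Nat.even_mul).
    unfold nu; rewrite Ev.
    replace (m / 2 + 1)%nat with j
      by (replace m with ((j - 1) * 2)%nat by lia; rewrite Nat.div_mul; lia).
    unfold bj, bsum; simpl; f_equal.
    apply Csum_ext; intros; rewrite Cscale_1; reflexivity.
  - rewrite Bool.andb_false_r, Kmj_bsum; auto.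
Qed.

Lemma cos_pred_mul_PI_div_neq0 m j : (1 <= j <= m)%nat -> (2 * j <> m + 2)%nat ->
  cos ((INR j - 1) * PI / INR m) <> 0.
Proof.
  intros Hj Hne; destruct j as [|n]; [lia|].
  rewrite S_INR; replace (INR n + 1 - 1) with (INR n) by ring.
  assert (Hm : 0 < INR m) by (apply lt_0_INR; lia).
  pose proof PI_RGT_0; pose proof (pos_INR n).
  assert (Hx : 0 <= INR n * PI / INR m) by (apply Rle_mult_inv_pos; nra).
  assert (Hnm : INR n < INR m) by (apply lt_INR; lia).
  assert (Ex : INR n * PI / INR m * (2 * INR m) = 2 * INR n * PI) by (field; lra).
  destruct (Nat.lt_ge_cases (2 * n) m) as [Hlt|Hge].
  - apply lt_INR in Hlt; rewrite mult_INR in Hlt; simpl (INR 2) in Hlt.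
    enough (0 < cos (INR n * PI / INR m)) by lra.
    apply cos_gt_0; [lra|].
    apply Rmult_lt_reg_r with (2 * INR m); [lra|]; rewrite Ex; nra.
  - assert (Hgt : (m < 2 * n)%nat) by lia.
    apply lt_INR in Hgt; rewrite mult_INR in Hgt; simpl (INR 2) in Hgt.
    enough (cos (INR n * PI / INR m) < 0) by lra.
    apply cos_lt_0.
    + apply Rmult_lt_reg_r with (2 * INR m); [lra|]; rewrite Ex; nra.
    + apply Rmult_lt_reg_r with (2 * INR m); [lra|]; rewrite Ex; nra.
Qed.

Lemma cj_scale_weight_neq0 m j : (3 <= m)%nat -> (1 <= j <= m)%nat ->
  cj_scale m j * (cj_weight m j 1%nat / 2) <> 0.
Proof.
  intros Hm Hj; unfold cj_scale, cj_weight.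
  assert (0 < INR m) by (apply lt_0_INR; lia).
  destruct (Nat.eqb_spec (2 * j) (m + 2)) as [E|E].
  - pose proof (Rinv_0_lt_compat (INR m) H); lra.
  - pose proof (cos_pred_mul_PI_div_neq0 m j Hj E); pose proof (Kweight_1_neq0 m j Hm Hj E).
    pose proof (Rinv_neq_0_compat PI PI_neq0).
    repeat apply Rmult_integral_contrapositive_currified; auto; lra.
Qed.

Lemma cj_0_const m a a' : cj m 0 a = cj m 0 a'.
Proof.
  unfold cj; replace (Nat.eqb (2 * 0) (m + 2)) with false by (symmetry; apply Nat.eqb_neq; lia).
  rewrite Bool.andb_false_r; reflexivity.
Qed.

Theorem mainTheorem6 (m : nat) (hm : (3 <= m)%nat) :
  (forall j : nat, (j <= m + 1)%nat -> is_poly_fun m (cj m j)) /\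
  (forall a a' : nat -> Cplx, cj m 0 a = cj m 0 a') /\
  (forall j : nat, (1 <= j <= m)%nat ->
     (forall a a' : nat -> Cplx,
        (forall i : nat, (1 <= i <= j)%nat -> a i = a' i) -> cj m j a = cj m j a') /\
     (forall a : nat -> Cplx, exists alpha beta : Cplx,
        alpha <> C0 /\
        forall x : Cplx, cj m j (upd a j x) = Cadd (Cmul alpha x) beta)).
Proof.
  split; [|split; [apply cj_0_const|]].
  - intros j _; destruct (Nat.eq_dec j 0) as [->|Hj].
    + apply (is_poly_fun_ext m (fun _ => cj m 0 (fun _ => C0)));
        [intros; apply cj_0_const | apply is_poly_fun_const].
    + apply (is_poly_fun_ext m (fun a => Cscale (cj_scale m j) (bsum m j (cj_weight m j) a))).
      * intros a; symmetry; apply cj_bsum; lia.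
      * apply is_poly_fun_scale, is_poly_fun_bsum.
  - intros j Hj; split.
    + intros a a' H; rewrite !cj_bsum by lia; f_equal; apply bsum_local; auto; lia.
    + intros a; exists (RtoC (cj_scale m j * (cj_weight m j 1%nat / 2))).
      exists (Cscale (cj_scale m j)
                (Csum (fun k => Cscale (cj_weight m j k) (bjk m a j k)) (seq 2 (j - 1)))).
      split; [apply RtoC_neq0, cj_scale_weight_neq0; auto|].
      intros x; rewrite cj_bsum, bsum_upd by lia.
      rewrite !Cscale_Cmul, RtoC_mult; ring.
Qed.
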